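(* Let $I\in\{0,1\}^{n\times m}$ and let $\mathcal{G}\subseteq\mathcal{B}(\mathcal{E}(I))$ be such that $\mathcal{E}(I)=A_{\mathcal{G}}\circ B_{\mathcal{G}}$. Then every set $\mathcal{F}\subseteq\mathcal{B}(I)$ that contains, for each $\langle C,D\rangle\in\mathcal{G}$, at least one concept from the interval $\mathcal{I}_{C,D}$ of $\mathcal{B}(I)$ satisfies $I=A_{\mathcal{F}}\circ B_{\mathcal{F}}$.
   Context: For any $K\in\{0,1\}^{n\times m}$, with $X=\{1,\dots,n\}$, $Y=\{1,\dots,m\}$, define for $C\subseteq X$, $D\subseteq Y$: $C^{\uparrow_K}=\{j\in Y\mid \forall i\in C: K_{ij}=1\}$, $D^{\downarrow_K}=\{i\in X\mid \forall j\in D: K_{ij}=1\}$, and $\mathcal{B}(K)=\{\langle C,D\rangle\mid C^{\uparrow_K}=D, D^{\downarrow_K}=C\}$, ordered by $\langle C_1,D_1\rangle\leq\langle C_2,D_2\rangle$ iff $C_1\subseteq C_2$. For $\mathcal{F}=\{\langle C_1,D_1\rangle,\dots,\langle C_p,D_p\rangle\}\subseteq\mathcal{B}(K)$, $(A_{\mathcal{F}})_{il}=1$ iff $i\in C_l$ and $(B_{\mathcal{F}})_{lj}=1$ iff $j\in D_l$; $\circ$ is the Boolean product $(A\circ B)_{ij}=\max_l\min(A_{il},B_{lj})$. For the given $I$: $\gamma(C)=\langle C^{\uparrow_I\downarrow_I},C^{\uparrow_I}\rangle$, $\mu(D)=\langle D^{\downarrow_I},D^{\downarrow_I\uparrow_I}\rangle$,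 $\mathcal{I}_{C,D}=\{c\in\mathcal{B}(I)\mid\gamma(C)\leq c\leq\mu(D)\}$, $\mathcal{I}_{ij}=\mathcal{I}_{\{i\},\{j\}}$. $\mathcal{E}(I)\in\{0,1\}^{n\times m}$ is defined by $\mathcal{E}(I)_{ij}=1$ iff $\mathcal{I}_{ij}$ is non-empty and minimal w.r.t. $\subseteq$ among the non-empty sets $\mathcal{I}_{i'j'}$. *)

From mathcomp Require Import all_boot all_order all_algebra.
Set Implicit Arguments. Unset Strict Implicit. Unset Printing Implicit Defensive.

(* A Boolean matrix K in {0,1}^{n x m} is 'M[bool]_(n, m); X = 'I_n, Y = 'I_m. *)
Definition concept (n m : nat) := ({set 'I_n} * {set 'I_m})%type.

Section Defs.
Variables n m : nat.

Definition up (K : 'M[bool]_(n, m)) (C : {set 'I_n}) : {set 'I_m} :=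
  [set j | [forall i in C, K i j]].
Definition down (K : 'M[bool]_(n, m)) (D : {set 'I_m}) : {set 'I_n} :=
  [set i | [forall j in D, K i j]].

Definition is_concept (K : 'M[bool]_(n, m)) (c : concept n m) : bool :=
  (up K c.1 == c.2) && (down K c.2 == c.1).

Definition concepts (K : 'M[bool]_(n, m)) : {set concept n m} :=
  [set c | is_concept K c].

Definition concept_le (c1 c2 : concept n m) : bool := c1.1 \subset c2.1.

Definition boolprod p (A : 'M[bool]_(n, p)) (B : 'M[bool]_(p, m)) : 'M[bool]_(n, m) :=
  \matrix_(i, j) [exists l : 'I_p, A i l && B l j].

Definition Amat (F : {set concept n m}) : 'M[bool]_(n, #|F|) :=
  \matrix_(i, l) (i \in (@enum_val _ (mem F) l : concept n m).1).
Definition Bmat (F : {set concept n m}) : 'M[bool]_(#|F|, m) :=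
  \matrix_(l, j) (j \in (@enum_val _ (mem F) l : concept n m).2).

Variable I : 'M[bool]_(n, m).

Definition gamma (C : {set 'I_n}) : concept n m := (down I (up I C), up I C).
Definition mu (D : {set 'I_m}) : concept n m := (down I D, up I (down I D)).

Definition cinterval (C : {set 'I_n}) (D : {set 'I_m}) : {set concept n m} :=
  [set c | is_concept I c && concept_le (gamma C) c && concept_le c (mu D)].

Definition Iij (i : 'I_n) (j : 'I_m) : {set concept n m} := cinterval [set i] [set j].

Definition E : 'M[bool]_(n, m) :=
  \matrix_(i, j) ((Iij i j != set0) &&
     [forall i' : 'I_n, forall j' : 'I_m,
        (Iij i' j' != set0) ==> ~~ (Iij i' j' \proper Iij i j)]).

End Defs.

(* If [I i j] holds, the interval [I_ij] is nonempty, so it contains an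
   inclusion-minimal nonempty [I_i'j'], i.e. one with [E(I) i' j']. The
   factorization of [E(I)] gives [<C, D>] in [G] with [i' in C] and [j' in D],
   whence [I_CD ⊆ I_i'j' ⊆ I_ij]; the concept that [F] picks in [I_CD] therefore
   covers [(i, j)]. Conversely every concept of [I] is a rectangle of ones. *)

From mathcomp Require Import all_boot all_order all_algebra.

Set Implicit Arguments.
Unset Strict Implicit.
Unset Printing Implicit Defensive.

Lemma ex_minimal_nonempty_below (T U : finType) (S : T -> {set U}) x :
  S x != set0 ->
  exists2 y, S y \subset S x &
    S y != set0 /\ forall z, S z != set0 -> ~~ (S z \proper S y).
Proof.
move=> Sx0.
pose P := [pred A : {set U} | (A != set0) && [exists z, A == S z]].
have PSx : P (S x) by rewrite inE Sx0; apply/existsP; exists x.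
have [A /minsetP [/andP [A0 /existsP [y /eqP defA]] minA] sub_Ax] :=
  minset_exists PSx.
exists y; rewrite -defA //; split=> // z Sz0; apply/negP => /andP [sub_zA].
have PSz : P (S z) by rewrite inE Sz0; apply/existsP; exists z.
by rewrite (minA _ PSz sub_zA) subxx.
Qed.

Section BoolProduct.
Variables n m : nat.

Lemma boolprodP p (A : 'M[bool]_(n, p)) (B : 'M[bool]_(p, m)) i j :
  reflect (exists l, A i l && B l j) (boolprod A B i j).
Proof. by rewrite mxE; apply: existsP. Qed.

Lemma boolprod_conceptsP (F : {set concept n m}) i j :
  reflect (exists2 c, c \in F & (i \in c.1) && (j \in c.2))
          (boolprod (Amat F) (Bmat F) i j).
Proof.
apply: (iffP (boolprodP _ _ _ _)) => [[l] | [c cF ijc]].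
  by rewrite !mxE; exists (enum_val l) => //; apply: enum_valP.
by exists (enum_rank_in cF c); rewrite !mxE enum_rankK_in.
Qed.

End BoolProduct.

Section Derivation.
Variables (n m : nat) (K : 'M[bool]_(n, m)).
Implicit Types (C : {set 'I_n}) (D : {set 'I_m}).

Lemma upP C j : reflect (forall i, i \in C -> K i j) (j \in up K C).
Proof. by rewrite inE; apply: forall_inP. Qed.

Lemma downP D i : reflect (forall j, j \in D -> K i j) (i \in down K D).
Proof. by rewrite inE; apply: forall_inP. Qed.

Lemma sub_down_up C : C \subset down K (up K C).
Proof. by apply/subsetP => i iC; apply/downP => j /upP; apply. Qed.

Lemma sub_up_down D : D \subset up K (down K D).
Proof. by apply/subsetP => j jD; apply/upP => i /downP; apply. Qed.

Lemma up_anti C1 C2 : C1 \subset C2 -> up K C2 \subset up K C1.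
Proof.
by move=> /subsetP sC; apply/subsetP => j /upP Kj; apply/upP => i /sC /Kj.
Qed.

Lemma down_anti D1 D2 : D1 \subset D2 -> down K D2 \subset down K D1.
Proof.
by move=> /subsetP sD; apply/subsetP => i /downP Ki; apply/downP => j /sD /Ki.
Qed.

Lemma up_down_up C : up K (down K (up K C)) = up K C.
Proof.
by apply/eqP; rewrite eqEsubset sub_up_down up_anti ?sub_down_up.
Qed.

Lemma gamma_concept C : is_concept K (gamma K C).
Proof. by rewrite /is_concept /= up_down_up !eqxx. Qed.

Lemma concept_entry c i j :
  is_concept K c -> i \in c.1 -> j \in c.2 -> K i j.
Proof. by case/andP => /eqP <- _ ic /upP; apply. Qed.

Lemma mem_cinterval C D c : c \in cinterval K C D =
  [&& is_concept K c, down K (up K C) \subset c.1 & c.1 \subset down K D].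
Proof. by rewrite inE -andbA. Qed.

Lemma cinterval_anti C1 C2 D1 D2 : C1 \subset C2 -> D1 \subset D2 ->
  cinterval K C2 D2 \subset cinterval K C1 D1.
Proof.
move=> sC sD; apply/subsetP => c; rewrite !mem_cinterval.
case/and3P => -> sCc scD /=; apply/andP; split.
  exact: subset_trans (down_anti (up_anti sC)) sCc.
exact: subset_trans scD (down_anti sD).
Qed.

Lemma cinterval_extent C D c : c \in cinterval K C D ->
  C \subset c.1 /\ D \subset c.2.
Proof.
rewrite mem_cinterval => /and3P [/andP [/eqP <- _] sCc scD]; split.
  exact: subset_trans (sub_down_up C) sCc.
exact: subset_trans (sub_up_down D) (up_anti scD).
Qed.

Lemma Iij_sub i j C D : i \in C -> j \in D -> cinterval K C D \subset Iij K i j.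
Proof. by rewrite -!sub1set; apply: cinterval_anti. Qed.

Lemma mem_Iij i j c : c \in Iij K i j -> (i \in c.1) && (j \in c.2).
Proof. by case/cinterval_extent; rewrite !sub1set => -> ->. Qed.

Lemma Iij_neq0 i j : K i j -> Iij K i j != set0.
Proof.
move=> Kij; apply/set0Pn; exists (gamma K [set i]).
rewrite mem_cinterval gamma_concept subxx /= down_anti // sub1set.
by apply/upP => i'; rewrite inE => /eqP ->.
Qed.

Lemma E_P i j :
  reflect (Iij K i j != set0 /\
           forall i' j', Iij K i' j' != set0 -> ~~ (Iij K i' j' \proper Iij K i j))
          (E K i j).
Proof.
rewrite mxE; apply: (iffP andP) => -[ij0 minij]; split=> //.
  by move=> i' j'; move/forallP/(_ i')/forallP/(_ j')/implyP: minij.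
by apply/forallP => i'; apply/forallP => j'; apply/implyP; apply: minij.
Qed.

Lemma ex_E_below i j : K i j ->
  exists i', exists2 j', E K i' j' & Iij K i' j' \subset Iij K i j.
Proof.
move=> /Iij_neq0 ij0.
have [[i' j'] sub_ij [i'j'0 minij]] :=
  @ex_minimal_nonempty_below _ _ (fun p => Iij K p.1 p.2) (i, j) ij0.
exists i', j' => //; apply/E_P; split=> // i'' j''.
exact: minij (i'', j'').
Qed.

End Derivation.

Theorem theorem3 (n m : nat) (I : 'M[bool]_(n, m)) (G : {set concept n m}) :
  G \subset concepts (E I) ->
  E I = boolprod (Amat G) (Bmat G) ->
  forall F : {set concept n m},
    F \subset concepts I ->
    (forall c, c \in G -> exists2 d, d \in F & d \in cinterval I c.1 c.2) ->
    I = boolprod (Amat F) (Bmat F).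
Proof.
move=> _ defE F sFI hitF; apply/matrixP => i j.
apply/idP/boolprod_conceptsP => [Kij | [c cF /andP [ic jc]]].
- have [i' [j' Ei'j' sub_ij]] := ex_E_below Kij.
  move: Ei'j'; rewrite defE => /boolprod_conceptsP [c cG /andP [i'c j'c]].
  have [d dF dCD] := hitF c cG.
  exists d => //; apply: (mem_Iij (subsetP sub_ij _ _)).
  exact: subsetP (Iij_sub I i'c j'c) _ dCD.
- by apply: concept_entry ic jc; move/subsetP/(_ c cF): sFI; rewrite inE.
Qed.
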